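(* Let $0<\alpha,\beta<1$ satisfy $\beta>2-\frac1\alpha$ and $\alpha>2-\frac1\beta$, and let $S\subset\mathbb{R}$ be a Bernstein set. Then Schmidt's game with parameters $\alpha,\beta$ and target set $S$ is not determined, i.e., neither Alice nor Bob has a winning strategy.
   Context: A Bernstein set is a set $S\subset\mathbb{R}$ that has nonempty intersection with every closed uncountable subset of $\mathbb{R}$ but contains no closed uncountable subset of $\mathbb{R}$. Schmidt's game with parameters $0<\alpha,\beta<1$ and target set $S\subset\mathbb{R}$: Bob first chooses a compact interval $B_0$ of positive length. Alice then chooses a compact interval $A_0\subset B_0$ with $|A_0|=\alpha|B_0|$. Bob then chooses a compact interval $B_1\subset A_0$ with $|B_1|=\beta|A_0|$, and so on: $A_n\subset B_n$ with $|A_n|=\alpha|B_n|$ and $B_{n+1}\subset A_n$ with $|B_{n+1}|=\beta|A_n|$. Here $|I|$ is the length of the interval $I$. Alice wins if $\bigcap_{n\ge0}B_n$ has nonempty intersection with $S$; otherwise Bob wins. A strategy is a rule specifying a legal move for a player in every situation as a function of previously chosen intervals; it is winning if it guarantees that player wins regardless of the opponent's moves. The game is determined on $S$ if one of the players has a winning strategy, and not determined otherwise. *)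

From Stdlib Require Import Reals List.
From Stdlib Require Export Rtopology.
Open Scope R_scope.

Definition countable_set (A : R -> Prop) : Prop :=
  exists f : R -> nat, forall x y, A x -> A y -> f x = f y -> x = y.

Definition Bernstein (S : R -> Prop) : Prop :=
  (forall F : R -> Prop, closed_set F -> ~ countable_set F ->
     exists x, F x /\ S x) /\
  (forall F : R -> Prop, closed_set F -> ~ countable_set F ->
     ~ (forall x, F x -> S x)).

(** A compact interval is encoded as a pair (a, l) denoting [a, a + l];
    it has positive length iff 0 < l. *)
Definition interval := (R * R)%type.
Definition left_end (I : interval) : R := fst I.
Definition len (I : interval) : R := snd I.
Definition in_interval (I : interval) (x : R) : Prop :=
  left_end I <= x <= left_end I + len I.
Definition subinterval (J I : interval) : Prop :=
  left_end I <= left_end J /\ left_end J + len J <= left_end I + len I.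

Definition legal_first (B0 : interval) : Prop := 0 < len B0.
Definition legal_alice (alpha : R) (B A : interval) : Prop :=
  subinterval A B /\ len A = alpha * len B.
Definition legal_bob (beta : R) (A B : interval) : Prop :=
  subinterval B A /\ len B = beta * len A.

(** A play is a sequence p of intervals with p (2n) = B_n and p (2n+1) = A_n. *)
Definition play := nat -> interval.
Definition legal_play (alpha beta : R) (p : play) : Prop :=
  legal_first (p 0%nat) /\
  forall n : nat,
    legal_alice alpha (p (2 * n)%nat) (p (2 * n + 1)%nat) /\
    legal_bob beta (p (2 * n + 1)%nat) (p (2 * n + 2)%nat).

Definition history (p : play) (k : nat) : list interval := map p (seq 0 k).

Definition alice_wins (S : R -> Prop) (p : play) : Prop :=
  exists x, S x /\ forall n : nat, in_interval (p (2 * n)%nat) x.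

Definition strategy := list interval -> interval.

Definition alice_strategy (alpha : R) (sigma : strategy) : Prop :=
  forall (h : list interval) (B : interval),
    0 < len B -> legal_alice alpha B (sigma (h ++ B :: nil)).

Definition bob_strategy (beta : R) (tau : strategy) : Prop :=
  legal_first (tau nil) /\
  forall (h : list interval) (A : interval),
    0 < len A -> legal_bob beta A (tau (h ++ A :: nil)).

Definition follows_alice (sigma : strategy) (p : play) : Prop :=
  forall n : nat, p (2 * n + 1)%nat = sigma (history p (2 * n + 1)).

Definition follows_bob (tau : strategy) (p : play) : Prop :=
  p 0%nat = tau nil /\
  forall n : nat, p (2 * n + 2)%nat = tau (history p (2 * n + 2)).

Definition alice_winning (alpha beta : R) (S : R -> Prop) (sigma : strategy) : Prop :=
  alice_strategy alpha sigma /\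
  forall p : play, legal_play alpha beta p -> follows_alice sigma p -> alice_wins S p.

Definition bob_winning (alpha beta : R) (S : R -> Prop) (tau : strategy) : Prop :=
  bob_strategy beta tau /\
  forall p : play, legal_play alpha beta p -> follows_bob tau p -> ~ alice_wins S p.

Definition determined (alpha beta : R) (S : R -> Prop) : Prop :=
  (exists sigma, alice_winning alpha beta S sigma) \/
  (exists tau, bob_winning alpha beta S tau).

From Stdlib Require Import Reals Lra Lia List Arith Classical ClassicalEpsilon.
Open Scope R_scope.

(* Fix a strategy of one player.  The other player answers it with a family of
   strategies indexed by codes [c : nat -> bool]: the rounds are cut into blocks of
   [N], and throughout block [j] he takes the left or the right end piece of the
   current interval according to [c j].  If [rho] is his ratio and [omega] the
   opponent's, then [rho (2 - omega) < 1] (which is how the hypotheses read for either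
   assignment of the ratios) makes [N] such pushes carry two plays whose codes first
   differ at [j] into disjoint intervals, whatever the opponent does.  As a play depends
   only on finitely many bits at each stage, the points reached by these plays form a
   closed uncountable set.  Against a winning strategy of Alice this set would lie in
   [S]; against a winning strategy of Bob it would miss [S]. *)

(** * Nested intervals and legal plays *)

Definition in_every_interval (p : play) (x : R) : Prop :=
  forall k, in_interval (p k) x.

Lemma nested_inter_nonempty (p : play) :
  (forall k, subinterval (p (S k)) (p k)) -> (forall k, 0 <= len (p k)) ->
  exists x, in_every_interval p x.
Proof.
  intros Hsub Hlen.
  assert (Hmono : forall k k', (k <= k')%nat -> subinterval (p k') (p k)).
  { intros k k' Hle; induction Hle as [|k' _ IH].
    - unfold subinterval; lra.
    - destruct (Hsub k'), IH; split; lra. }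
  assert (Hle : forall k k', left_end (p k) <= left_end (p k') + len (p k')).
  { intros k k'; pose proof (Hlen k); pose proof (Hlen k').
    destruct (Nat.le_ge_cases k k') as [Hkk|Hkk]; destruct (Hmono _ _ Hkk); lra. }
  destruct (completeness (fun y => exists k, y = left_end (p k))) as [x [Hub Hlub]].
  - exists (left_end (p 0%nat) + len (p 0%nat)); intros y [k ->]; apply Hle.
  - exists (left_end (p 0%nat)), 0%nat; reflexivity.
  - exists x; intro k; split.
    + apply Hub; exists k; reflexivity.
    + apply Hlub; intros y [k' ->]; apply Hle.
Qed.

Lemma legal_play_step (alpha beta : R) (p : play) :
  legal_play alpha beta p -> forall k,
  subinterval (p (S k)) (p k) /\
  len (p (S k)) = (if Nat.even k then alpha else beta) * len (p k).
Proof.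
  intros [_ Hp] k; destruct (Nat.Even_or_Odd k) as [[n ->]|[n ->]].
  - replace (S (2 * n)) with (2 * n + 1)%nat by lia.
    rewrite Nat.even_mul; exact (proj1 (Hp n)).
  - replace (S (2 * n + 1)) with (2 * n + 2)%nat by lia.
    rewrite Nat.even_add, Nat.even_mul; exact (proj2 (Hp n)).
Qed.

Lemma legal_play_nested (alpha beta : R) (p : play) :
  0 < alpha -> 0 < beta -> legal_play alpha beta p ->
  forall k, subinterval (p (S k)) (p k) /\ 0 < len (p k).
Proof.
  intros Ha Hb Hp k; split; [apply (legal_play_step _ _ _ Hp)|].
  induction k as [|k IH]; [apply Hp|].
  rewrite (proj2 (legal_play_step _ _ _ Hp k)).
  destruct (Nat.even k); apply Rmult_lt_0_compat; assumption.
Qed.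

Lemma legal_play_even_len (alpha beta : R) (p : play) :
  legal_play alpha beta p ->
  forall n, len (p (2 * n)%nat) = (alpha * beta) ^ n * len (p 0%nat).
Proof.
  intros [_ Hp] n; induction n as [|n IH]; [simpl; ring|].
  destruct (Hp n) as [[_ E1] [_ E2]].
  replace (2 * S n)%nat with (2 * n + 2)%nat by lia.
  rewrite E2, E1, IH; simpl; ring.
Qed.

Lemma legal_play_even_point_unique (alpha beta : R) (p : play) (x y : R) :
  0 < alpha < 1 -> 0 < beta < 1 -> legal_play alpha beta p ->
  (forall n, in_interval (p (2 * n)%nat) x) ->
  (forall n, in_interval (p (2 * n)%nat) y) -> x = y.
Proof.
  intros Ha Hb Hp Hx Hy.
  destruct (Req_dec x y) as [|Hne]; [assumption|exfalso].
  pose proof (proj1 Hp) as H0; unfold legal_first in H0.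
  destruct (pow_lt_1_zero (alpha * beta)) with (y := Rabs (x - y) / len (p 0%nat))
    as [n Hn].
  - rewrite Rabs_right by nra; nra.
  - apply Rdiv_lt_0_compat; [apply Rabs_pos_lt; lra | exact H0].
  - specialize (Hn n (le_n n)).
    rewrite Rabs_right in Hn by (apply Rle_ge, pow_le; nra).
    apply (Rmult_lt_compat_r (len (p 0%nat))) in Hn; [|exact H0].
    unfold Rdiv in Hn; rewrite Rmult_assoc, Rinv_l, Rmult_1_r in Hn by lra.
    rewrite <- (legal_play_even_len _ _ _ Hp n) in Hn.
    specialize (Hx n); specialize (Hy n); unfold in_interval in *.
    unfold Rabs in Hn; destruct (Rcase_abs (x - y)); lra.
Qed.

(** * Perfect sets of points indexed by codes *)

Definition adherent (A : R -> Prop) (x : R) : Prop :=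
  forall eps, 0 < eps -> exists y, A y /\ Rabs (y - x) < eps.

Lemma closed_set_of_adherent (A : R -> Prop) :
  (forall x, adherent A x -> A x) -> closed_set A.
Proof.
  intros H x nAx; apply NNPP; intro Hn; apply nAx, H; intros eps Heps.
  apply NNPP; intro Hy; apply Hn; exists (mkposreal eps Heps).
  intros y Hd Ay; apply Hy; exists y; split; assumption.
Qed.

Lemma adherent_mono (A B : R -> Prop) (x : R) :
  (forall y, A y -> B y) -> adherent A x -> adherent B x.
Proof.
  intros H Ha eps He; destruct (Ha eps He) as [y [Ay Hy]]; exists y; auto.
Qed.

Lemma adherent_or (A B : R -> Prop) (x : R) :
  adherent (fun y => A y \/ B y) x -> adherent A x \/ adherent B x.
Proof.
  intros H; apply NNPP; intros [Na Nb]%not_or_and.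
  apply not_all_ex_not in Na as [e1 [He1 Na]%imply_to_and].
  apply not_all_ex_not in Nb as [e2 [He2 Nb]%imply_to_and].
  destruct (H (Rmin e1 e2)) as [y [[Ay|By] Hy]]; [apply Rmin_pos; assumption | |].
  - apply Na; exists y; split; [assumption|]; pose proof (Rmin_l e1 e2); lra.
  - apply Nb; exists y; split; [assumption|]; pose proof (Rmin_r e1 e2); lra.
Qed.

Lemma adherent_in_interval (A : R -> Prop) (I : interval) (x : R) :
  (forall y, A y -> in_interval I y) -> adherent A x -> in_interval I x.
Proof.
  intros H Ha; unfold in_interval in *.
  destruct (Rle_or_lt (left_end I) x) as [H1|H1];
    [destruct (Rle_or_lt x (left_end I + len I)) as [H2|H2]; [lra|] |].
  - destruct (Ha (x - (left_end I + len I))) as [y [Ay Hy]]; [lra|].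
    apply H in Ay; apply Rabs_def2 in Hy; lra.
  - destruct (Ha (left_end I - x)) as [y [Ay Hy]]; [lra|].
    apply H in Ay; apply Rabs_def2 in Hy; lra.
Qed.

Definition agree (c c' : nat -> bool) (j : nat) : Prop :=
  forall i, (i < j)%nat -> c i = c' i.

Lemma first_difference (c c' : nat -> bool) (i : nat) :
  c i <> c' i -> exists j, agree c c' j /\ c j <> c' j.
Proof.
  induction i as [i IH] using lt_wf_ind; intros Hi.
  destruct (classic (agree c c' i)) as [Ha|Ha]; [exists i; split; assumption|].
  apply not_all_ex_not in Ha as [i' [Hlt Hne]%imply_to_and].
  exact (IH i' Hlt Hne).
Qed.

Lemma codes_not_injective (g : (nat -> bool) -> nat) :
  ~ (forall c c', g c = g c' -> forall i, c i = c' i).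
Proof.
  intros Hinj.
  set (d k := if excluded_middle_informative (exists c, g c = k /\ c k = true)
              then false else true).
  assert (Hd : forall k, d k = false <-> exists c, g c = k /\ c k = true).
  { intro k; unfold d; destruct (excluded_middle_informative _); split;
      intro; solve [tauto | discriminate]. }
  destruct (d (g d)) eqn:E.
  - assert (d (g d) = false) by (apply Hd; exists d; split; [reflexivity | assumption]).
    congruence.
  - destruct (proj1 (Hd (g d)) E) as [c [Hc Hct]].
    rewrite (Hinj c d Hc) in Hct; congruence.
Qed.

Definition set_bit (c : nat -> bool) (n : nat) (b : bool) : nat -> bool :=
  fun i => if Nat.eqb i n then b else c i.

Fixpoint branch (Q : (nat -> bool) -> nat -> Prop) (n : nat) : nat -> bool :=
  match n with
  | O => fun _ => false
  | S n =>
      let d := branch Q n in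
      if excluded_middle_informative (Q (set_bit d n false) (S n))
      then set_bit d n false else set_bit d n true
  end.

Lemma branch_spec (Q : (nat -> bool) -> nat -> Prop) :
  Q (fun _ => false) 0%nat ->
  (forall d n, Q d n -> Q (set_bit d n false) (S n) \/ Q (set_bit d n true) (S n)) ->
  forall n, Q (branch Q n) n.
Proof.
  intros H0 Hext n; induction n as [|n IH]; [exact H0|]; simpl.
  destruct (excluded_middle_informative _) as [H|H]; [exact H|].
  destruct (Hext _ _ IH); tauto.
Qed.

Lemma branch_stable (Q : (nat -> bool) -> nat -> Prop) (n i : nat) :
  (i < n)%nat -> branch Q n i = branch Q (S i) i.
Proof.
  induction n as [|n IH]; intros Hi; [lia|].
  destruct (Nat.eq_dec i n) as [->|Hne]; [reflexivity|].
  simpl branch at 1; destruct (excluded_middle_informative _); unfold set_bit;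
    rewrite (proj2 (Nat.eqb_neq i n) Hne); apply IH; lia.
Qed.

Definition limit_set (P : (nat -> bool) -> play) (x : R) : Prop :=
  exists c, in_every_interval (P c) x.

Lemma limit_set_closed (P : (nat -> bool) -> play) :
  (forall k, exists j, forall c c', agree c c' j -> P c k = P c' k) ->
  closed_set (limit_set P).
Proof.
  intros Hcont; apply closed_set_of_adherent; intros x Hx.
  set (near d j y := exists c', agree d c' j /\ in_every_interval (P c') y).
  (* König's lemma: choose the bits one by one so that [x] stays adherent to
     the outcomes of the codes extending the chosen prefix. *)
  set (Q d j := adherent (near d j) x).
  assert (HQ : forall n, Q (branch Q n) n).
  { apply branch_spec.
    - revert Hx; apply adherent_mono; intros y [c Hc].
      exists c; split; [intros i Hi; lia | exact Hc].
    - intros d n Hd; apply adherent_or; revert Hd; apply adherent_mono.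
      intros y [c' [Ha Hy]].
      assert (Hext : agree (set_bit d n (c' n)) c' (S n)).
      { intros i Hi; unfold set_bit.
        destruct (Nat.eqb_spec i n); [congruence | apply Ha; lia]. }
      destruct (c' n); [right | left]; exists c'; split; assumption. }
  exists (fun i => branch Q (S i) i); intro k.
  destruct (Hcont k) as [j Hj].
  apply (adherent_in_interval (near (branch Q j) j)); [|apply HQ].
  intros y [c' [Ha Hy]]; rewrite (Hj _ c'); [apply Hy|].
  intros i Hi; rewrite <- Ha by exact Hi; symmetry; apply branch_stable, Hi.
Qed.

Lemma limit_set_uncountable (P : (nat -> bool) -> play) :
  (forall c, exists x, in_every_interval (P c) x) ->
  (forall c c' j, agree c c' j -> c j <> c' j ->
     forall x y, in_every_interval (P c) x -> in_every_interval (P c') y -> x <> y) ->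
  ~ countable_set (limit_set P).
Proof.
  intros Hpt Hsep [f Hf].
  assert (Hch : forall c, {x | in_every_interval (P c) x})
    by (intro c; apply constructive_indefinite_description, Hpt).
  apply (codes_not_injective (fun c => f (proj1_sig (Hch c)))).
  intros c c' Heq i; apply NNPP; intro Hne.
  destruct (first_difference c c' i Hne) as [j [Ha Hj]].
  pose proof (proj2_sig (Hch c)) as Hx; pose proof (proj2_sig (Hch c')) as Hy.
  apply (Hsep c c' j Ha Hj _ _ Hx Hy), Hf;
    [exists c; exact Hx | exists c'; exact Hy | exact Heq].
Qed.

(** * Pushing towards one end *)

Definition end_piece (b : bool) (r : R) (J : interval) : interval :=
  if b then (left_end J + (1 - r) * len J, r * len J) else (left_end J, r * len J).

Lemma len_end_piece (b : bool) (r : R) (J : interval) :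
  len (end_piece b r J) = r * len J.
Proof. destruct b; reflexivity. Qed.

Lemma end_piece_subinterval (b : bool) (r : R) (J : interval) :
  0 <= r <= 1 -> 0 <= len J -> subinterval (end_piece b r J) J.
Proof.
  intros Hr HJ; destruct b; unfold subinterval, end_piece, left_end, len in *;
    simpl; split; nra.
Qed.

Definition reach (b : bool) (J I : interval) : R :=
  if b then left_end J + len J - left_end I else left_end I + len I - left_end J.

Lemma reach_end_piece (b : bool) (r : R) (J u I : interval) :
  subinterval I (end_piece b r u) -> reach b J I <= reach b J u - (1 - r) * len u.
Proof. destruct b; unfold subinterval, reach, end_piece, left_end, len; simpl; lra. Qed.

Lemma reach_disjoint (b : bool) (J A A' : interval) (x y : R) :
  reach b J A + reach (negb b) J A' < len J ->
  in_interval A x -> in_interval A' y -> x <> y.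
Proof. destruct b; unfold reach, in_interval; simpl; lra. Qed.

Definition pushed (b : bool) (rho omega : R) (N : nat) (u : nat -> interval) : Prop :=
  forall i, (i < N)%nat ->
    subinterval (u (S i)) (end_piece b rho (u i)) /\
    len (u (S i)) = omega * rho * len (u i).

Lemma pushed_len (b : bool) (rho omega : R) (N : nat) (u : nat -> interval) :
  pushed b rho omega N u ->
  forall n, (n <= N)%nat -> len (u n) = (omega * rho) ^ n * len (u 0%nat).
Proof.
  intros Hu n; induction n as [|n IH]; intros Hn; [simpl; ring|].
  rewrite (proj2 (Hu n ltac:(lia))), IH by lia; simpl; ring.
Qed.

(* As [n] grows, [u n] stays within [(1 - omega) rho / (1 - omega rho) * len (u 0)]
   of side [b] of [u 0]; this is less than [len (u 0) / 2] iff [rho (2 - omega) < 1]. *)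
Lemma pushed_reach (b : bool) (rho omega : R) (N : nat) (u : nat -> interval) :
  0 <= rho <= 1 -> 0 <= omega <= 1 -> pushed b rho omega N u ->
  forall n, (n <= N)%nat ->
  (1 - omega * rho) * reach b (u 0%nat) (u n)
    <= (1 - omega) * rho * len (u 0%nat) + (1 - rho) * len (u n).
Proof.
  intros Hr Ho Hu n; induction n as [|n IH]; intros Hn.
  - destruct b; unfold reach; lra.
  - destruct (Hu n) as [Hsub Hlen]; [lia|].
    specialize (IH ltac:(lia)).
    assert (Hpos : 0 <= 1 - omega * rho) by nra.
    pose proof (Rmult_le_compat_l _ _ _ Hpos (reach_end_piece _ _ (u 0%nat) _ _ Hsub)).
    rewrite Hlen; lra.
Qed.

Lemma pushed_separate (b : bool) (rho omega : R) (N : nat) (u u' : nat -> interval)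
    (x y : R) :
  0 < rho < 1 -> 0 < omega < 1 ->
  2 * (1 - rho) * (omega * rho) ^ N < 1 - rho * (2 - omega) ->
  u 0%nat = u' 0%nat -> 0 < len (u 0%nat) ->
  pushed b rho omega N u -> pushed (negb b) rho omega N u' ->
  in_interval (u N) x -> in_interval (u' N) y -> x <> y.
Proof.
  intros Hr Ho HN E0 Hl Hu Hu'.
  apply (reach_disjoint b (u 0%nat)).
  pose proof (pushed_reach b rho omega N u ltac:(lra) ltac:(lra) Hu N (le_n N)) as R1.
  pose proof (pushed_reach _ rho omega N u' ltac:(lra) ltac:(lra) Hu' N (le_n N)) as R2.
  rewrite (pushed_len _ _ _ _ _ Hu N (le_n N)) in R1.
  rewrite (pushed_len _ _ _ _ _ Hu' N (le_n N)), <- E0 in R2.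
  assert (HNl : 2 * (1 - rho) * (omega * rho) ^ N * len (u 0%nat)
                < (1 - rho * (2 - omega)) * len (u 0%nat))
    by (apply Rmult_lt_compat_r; assumption).
  apply (Rmult_lt_reg_l (1 - omega * rho)); [nra | lra].
Qed.

(** * Plays generated by strategies *)

Lemma history_S (p : play) (k : nat) : history p (S k) = history p k ++ p k :: nil.
Proof. unfold history; rewrite seq_S, map_app; reflexivity. Qed.

Lemma length_history (p : play) (k : nat) : length (history p k) = k.
Proof. unfold history; rewrite length_map, length_seq; reflexivity. Qed.

Fixpoint generated_history (mv : strategy) (k : nat) : list interval :=
  match k with
  | O => nil
  | S k => generated_history mv k ++ mv (generated_history mv k) :: nil
  end.

Definition generated_play (mv : strategy) : play :=
  fun k => mv (generated_history mv k).

Lemma history_generated (mv : strategy) (k : nat) :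
  history (generated_play mv) k = generated_history mv k.
Proof.
  induction k as [|k IH]; [reflexivity|].
  rewrite history_S, IH; reflexivity.
Qed.

Lemma generated_playE (mv : strategy) (k : nat) :
  generated_play mv k = mv (history (generated_play mv) k).
Proof. rewrite history_generated; reflexivity. Qed.

Lemma generated_play_agree (mv mv' : strategy) (K : nat) :
  (forall h, (length h <= K)%nat -> mv h = mv' h) ->
  forall k, (k <= K)%nat -> generated_play mv k = generated_play mv' k.
Proof.
  intros Hmv k; induction k as [k IH] using lt_wf_ind; intros Hk.
  rewrite !generated_playE.
  replace (history (generated_play mv') k) with (history (generated_play mv) k).
  - apply Hmv; rewrite length_history; exact Hk.
  - apply map_ext_in; intros i Hi%in_seq; apply IH; lia.
Qed.

Definition play_of (sigma tau : strategy) : play :=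
  generated_play (fun h => if Nat.even (length h) then tau h else sigma h).

Lemma play_ofE (sigma tau : strategy) (k : nat) :
  play_of sigma tau k = (if Nat.even k then tau else sigma) (history (play_of sigma tau) k).
Proof.
  unfold play_of at 1; rewrite generated_playE, length_history.
  destruct (Nat.even k); reflexivity.
Qed.

Lemma play_of_follows_alice (sigma tau : strategy) : follows_alice sigma (play_of sigma tau).
Proof.
  intro n; rewrite play_ofE, Nat.even_add, Nat.even_mul; reflexivity.
Qed.

Lemma play_of_follows_bob (sigma tau : strategy) : follows_bob tau (play_of sigma tau).
Proof.
  split; [reflexivity|].
  intro n; rewrite play_ofE, Nat.even_add, Nat.even_mul; reflexivity.
Qed.

Lemma follows_legal (alpha beta : R) (sigma tau : strategy) (p : play) :
  0 < alpha -> 0 < beta -> alice_strategy alpha sigma -> bob_strategy beta tau ->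
  follows_alice sigma p -> follows_bob tau p -> legal_play alpha beta p.
Proof.
  intros Ha Hb Hs [H0 Ht] Fa [F0 Fb].
  assert (Hround : forall n, 0 < len (p (2 * n)%nat) ->
            legal_alice alpha (p (2 * n)%nat) (p (2 * n + 1)%nat) /\
            legal_bob beta (p (2 * n + 1)%nat) (p (2 * n + 2)%nat)).
  { intros n Hn.
    assert (HA : legal_alice alpha (p (2 * n)%nat) (p (2 * n + 1)%nat)).
    { rewrite Fa, Nat.add_1_r, history_S; apply Hs, Hn. }
    split; [exact HA|].
    rewrite Fb; replace (2 * n + 2)%nat with (S (2 * n + 1)) by lia.
    rewrite history_S; apply Ht; destruct HA as [_ ->]; nra. }
  assert (Hpos : forall n, 0 < len (p (2 * n)%nat)).
  { induction n as [|n IH]; [change (0 < len (p 0%nat)); rewrite F0; exact H0|].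
    destruct (Hround n IH) as [[_ E1] [_ E2]].
    replace (2 * S n)%nat with (2 * n + 2)%nat by lia.
    rewrite E2, E1; apply Rmult_lt_0_compat; [lra|]; apply Rmult_lt_0_compat; lra. }
  split; [rewrite F0; exact H0 | intro n; apply Hround, Hpos].
Qed.

Lemma play_of_legal (alpha beta : R) (sigma tau : strategy) :
  0 < alpha -> 0 < beta -> alice_strategy alpha sigma -> bob_strategy beta tau ->
  legal_play alpha beta (play_of sigma tau).
Proof.
  intros Ha Hb Hs Ht.
  apply (follows_legal alpha beta sigma tau); try assumption.
  - apply play_of_follows_alice.
  - apply play_of_follows_bob.
Qed.

(* A history of length [2n+1] (Alice to move) or [2n+2] (Bob to move) belongs to
   round [n], and round [n] to block [n / N]; the empty history yields Bob's opening
   move. *)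
Definition pusher (r : R) (N : nat) (c : nat -> bool) : strategy :=
  fun h => match h with
           | nil => (0, 1)
           | _ => end_piece (c ((length h - 1) / 2 / N)%nat) r (last h (0, 0))
           end.

Lemma pusher_snoc (r : R) (N : nat) (c : nat -> bool) (h : list interval) (B : interval) :
  pusher r N c (h ++ B :: nil) = end_piece (c (length h / 2 / N)%nat) r B.
Proof.
  destruct h as [|A h]; [reflexivity|]; unfold pusher; cbn [app].
  rewrite app_comm_cons, last_last, length_app, Nat.add_sub; reflexivity.
Qed.

Lemma pusher_alice_strategy (r : R) (N : nat) (c : nat -> bool) :
  0 < r < 1 -> alice_strategy r (pusher r N c).
Proof.
  intros Hr h B HB; rewrite pusher_snoc.
  split; [apply end_piece_subinterval; lra | apply len_end_piece].
Qed.

Lemma pusher_bob_strategy (r : R) (N : nat) (c : nat -> bool) :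
  0 < r < 1 -> bob_strategy r (pusher r N c).
Proof.
  intros Hr; split; [unfold legal_first, len; simpl; lra|].
  intros h A HA; rewrite pusher_snoc.
  split; [apply end_piece_subinterval; lra | apply len_end_piece].
Qed.

Lemma pusher_move (r : R) (N : nat) (c : nat -> bool) (p : play) (n e : nat) :
  (e < 2)%nat -> p (2 * n + e + 1)%nat = pusher r N c (history p (2 * n + e + 1)) ->
  p (2 * n + e + 1)%nat = end_piece (c (n / N)%nat) r (p (2 * n + e)%nat).
Proof.
  intros He E; rewrite E, Nat.add_1_r, history_S, pusher_snoc, length_history.
  replace ((2 * n + e) / 2)%nat with n; [reflexivity|].
  rewrite Nat.mul_comm, Nat.div_add_l, Nat.div_small; lia.
Qed.

Lemma pusher_agree (r : R) (N : nat) (c c' : nat -> bool) (j : nat) (h : list interval) :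
  agree c c' j -> (length h <= 2 * (j * N))%nat -> pusher r N c h = pusher r N c' h.
Proof.
  intros Hag Hh; destruct h as [|A h]; [reflexivity|]; unfold pusher.
  rewrite Hag; [reflexivity|].
  apply Nat.Div0.div_lt_upper_bound, Nat.Div0.div_lt_upper_bound; simpl in *; lia.
Qed.

(** * Coded plays *)

Section CodedPlays.

(* [e = 0] when Alice is the pushing player, [e = 1] when Bob is. *)
Variables (rho omega : R) (N e : nat) (P : (nat -> bool) -> play).

Hypothesis Hrho : 0 < rho < 1.
Hypothesis Homega : 0 < omega < 1.
Hypothesis HN0 : (0 < N)%nat.
Hypothesis HN : 2 * (1 - rho) * (omega * rho) ^ N < 1 - rho * (2 - omega).
Hypothesis P_nested : forall c k, subinterval (P c (S k)) (P c k) /\ 0 < len (P c k).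
Hypothesis P_push : forall c n,
  P c (2 * n + e + 1)%nat = end_piece (c (n / N)%nat) rho (P c (2 * n + e)%nat).
Hypothesis P_reply : forall c n,
  subinterval (P c (2 * n + e + 2)%nat) (P c (2 * n + e + 1)%nat) /\
  len (P c (2 * n + e + 2)%nat) = omega * len (P c (2 * n + e + 1)%nat).
Hypothesis P_agree : forall c c' j k,
  agree c c' j -> (k <= 2 * (j * N) + e)%nat -> P c k = P c' k.

Lemma coded_plays_continuous :
  forall k, exists j, forall c c', agree c c' j -> P c k = P c' k.
Proof.
  intro k; exists k; intros c c' Hag; apply (P_agree c c' k); [assumption|].
  pose proof (Nat.mul_le_mono_l 1 N k HN0); lia.
Qed.

Lemma coded_plays_separated (c c' : nat -> bool) (j : nat) :
  agree c c' j -> c j <> c' j ->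
  forall x y, in_every_interval (P c) x -> in_every_interval (P c') y -> x <> y.
Proof.
  intros Hag Hj x y Hx Hy.
  set (u d i := P d (2 * (j * N + i) + e)%nat).
  assert (Hpushed : forall d, pushed (d j) rho omega N (u d)).
  { intros d i Hi; unfold u.
    replace (2 * (j * N + S i) + e)%nat with (2 * (j * N + i) + e + 2)%nat by lia.
    destruct (P_reply d (j * N + i)) as [Hsub Hlen].
    rewrite P_push in Hsub, Hlen.
    rewrite Nat.div_add_l, Nat.div_small, Nat.add_0_r in Hsub, Hlen by lia.
    split; [exact Hsub|]; rewrite Hlen, len_end_piece; ring. }
  assert (Hc' : c' j = negb (c j)) by (destruct (c j), (c' j); simpl; congruence).
  apply (pushed_separate (c j) rho omega N (u c) (u c')); try assumption.
  - apply (P_agree c c' j); [assumption | lia].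
  - apply P_nested.
  - apply Hpushed.
  - rewrite <- Hc'; apply Hpushed.
  - apply Hx.
  - apply Hy.
Qed.

Lemma coded_limit_set_closed_uncountable :
  closed_set (limit_set P) /\ ~ countable_set (limit_set P).
Proof.
  split; [apply limit_set_closed, coded_plays_continuous|].
  apply limit_set_uncountable; [|exact coded_plays_separated].
  intro c; apply nested_inter_nonempty; intro k; [apply P_nested|].
  apply Rlt_le, P_nested.
Qed.

End CodedPlays.

Lemma alice_coded_limit_set (alpha beta : R) (tau : strategy) (N : nat) :
  0 < alpha < 1 -> 0 < beta < 1 -> bob_strategy beta tau -> (0 < N)%nat ->
  2 * (1 - alpha) * (beta * alpha) ^ N < 1 - alpha * (2 - beta) ->
  closed_set (limit_set (fun c => play_of (pusher alpha N c) tau)) /\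
  ~ countable_set (limit_set (fun c => play_of (pusher alpha N c) tau)).
Proof.
  intros Ha Hb Ht HN0 HN.
  assert (Hlegal : forall c, legal_play alpha beta (play_of (pusher alpha N c) tau)).
  { intro c; apply play_of_legal; [lra | lra | apply pusher_alice_strategy; lra | exact Ht]. }
  apply (coded_limit_set_closed_uncountable alpha beta N 0); try assumption.
  - intros c; apply (legal_play_nested alpha beta); [lra | lra | apply Hlegal].
  - intros c n; apply pusher_move; [lia|].
    rewrite Nat.add_0_r; apply play_of_follows_alice.
  - intros c n; rewrite Nat.add_0_r; apply (Hlegal c).
  - intros c c' j k Hag Hk; apply generated_play_agree with (2 * (j * N))%nat; [|lia].
    intros h Hh; destruct (Nat.even (length h)); [reflexivity|].
    apply pusher_agree with j; assumption.
Qed.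

Lemma bob_coded_limit_set (alpha beta : R) (sigma : strategy) (N : nat) :
  0 < alpha < 1 -> 0 < beta < 1 -> alice_strategy alpha sigma -> (0 < N)%nat ->
  2 * (1 - beta) * (alpha * beta) ^ N < 1 - beta * (2 - alpha) ->
  closed_set (limit_set (fun c => play_of sigma (pusher beta N c))) /\
  ~ countable_set (limit_set (fun c => play_of sigma (pusher beta N c))).
Proof.
  intros Ha Hb Hs HN0 HN.
  assert (Hlegal : forall c, legal_play alpha beta (play_of sigma (pusher beta N c))).
  { intro c; apply play_of_legal; [lra | lra | exact Hs | apply pusher_bob_strategy; lra]. }
  apply (coded_limit_set_closed_uncountable beta alpha N 1); try assumption.
  - intros c; apply (legal_play_nested alpha beta); [lra | lra | apply Hlegal].
  - intros c n; apply pusher_move; [lia|].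
    replace (2 * n + 1 + 1)%nat with (2 * n + 2)%nat by lia.
    apply play_of_follows_bob.
  - intros c n; replace (2 * n + 1 + 2)%nat with (2 * S n + 1)%nat by lia.
    replace (2 * n + 1 + 1)%nat with (2 * S n)%nat by lia.
    apply (Hlegal c).
  - intros c c' j k Hag Hk; apply generated_play_agree with (2 * (j * N) + 1)%nat; [|lia].
    intros h Hh; destruct (Nat.even (length h)) eqn:Hev; [|reflexivity].
    apply pusher_agree with j; [assumption|].
    apply Nat.even_spec in Hev as [q Hq]; lia.
Qed.

Lemma exists_push_count (rho omega : R) :
  0 < rho < 1 -> 0 < omega < 1 -> rho * (2 - omega) < 1 ->
  exists N, (0 < N)%nat /\ 2 * (1 - rho) * (omega * rho) ^ N < 1 - rho * (2 - omega).
Proof.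
  intros Hr Ho Hc.
  destruct (pow_lt_1_zero (omega * rho)) with (y := (1 - rho * (2 - omega)) / 2)
    as [N HN]; [rewrite Rabs_right; nra | lra |].
  exists (S N); split; [lia|].
  specialize (HN (S N) (le_S _ _ (le_n N))).
  rewrite Rabs_right in HN by (apply Rle_ge, pow_le; nra).
  assert (0 <= (omega * rho) ^ S N) by (apply pow_le; nra).
  nra.
Qed.

Lemma no_alice_winning_strategy (alpha beta : R) (S : R -> Prop) :
  0 < alpha < 1 -> 0 < beta < 1 -> beta * (2 - alpha) < 1 ->
  (forall F, closed_set F -> ~ countable_set F -> ~ (forall x, F x -> S x)) ->
  ~ exists sigma, alice_winning alpha beta S sigma.
Proof.
  intros Ha Hb Hc HS [sigma [Hs Hwin]].
  destruct (exists_push_count beta alpha Hb Ha Hc) as [N [HN0 HN]].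
  destruct (bob_coded_limit_set alpha beta sigma N Ha Hb Hs HN0 HN) as [Hcl Hunc].
  apply (HS _ Hcl Hunc); intros x [c Hx].
  assert (Hlegal : legal_play alpha beta (play_of sigma (pusher beta N c)))
    by (apply play_of_legal; [lra | lra | exact Hs | apply pusher_bob_strategy; lra]).
  destruct (Hwin _ Hlegal (play_of_follows_alice _ _)) as [y [Sy Hy]].
  replace x with y; [exact Sy|].
  apply (legal_play_even_point_unique alpha beta _ y x Ha Hb Hlegal Hy).
  intro n; apply Hx.
Qed.

Lemma no_bob_winning_strategy (alpha beta : R) (S : R -> Prop) :
  0 < alpha < 1 -> 0 < beta < 1 -> alpha * (2 - beta) < 1 ->
  (forall F, closed_set F -> ~ countable_set F -> exists x, F x /\ S x) ->
  ~ exists tau, bob_winning alpha beta S tau.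
Proof.
  intros Ha Hb Hc HS [tau [Ht Hwin]].
  destruct (exists_push_count alpha beta Ha Hb Hc) as [N [HN0 HN]].
  destruct (alice_coded_limit_set alpha beta tau N Ha Hb Ht HN0 HN) as [Hcl Hunc].
  destruct (HS _ Hcl Hunc) as [x [[c Hx] Sx]].
  apply (Hwin (play_of (pusher alpha N c) tau)).
  - apply play_of_legal; [lra | lra | apply pusher_alice_strategy; lra | exact Ht].
  - apply play_of_follows_bob.
  - exists x; split; [exact Sx | intro n; apply Hx].
Qed.

Lemma mul_two_sub_lt_1 (a b : R) : 0 < a -> b > 2 - 1 / a -> a * (2 - b) < 1.
Proof. intros Ha H; assert (a * (1 / a) = 1) by (field; lra); nra. Qed.

Theorem theorem3 (alpha beta : R) (S : R -> Prop) :
  0 < alpha < 1 -> 0 < beta < 1 ->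
  beta > 2 - 1 / alpha -> alpha > 2 - 1 / beta ->
  Bernstein S ->
  ~ (exists sigma, alice_winning alpha beta S sigma) /\
  ~ (exists tau, bob_winning alpha beta S tau).
Proof.
  intros Ha Hb Hab Hba [Hmeets Hnot_contains]; split.
  - apply no_alice_winning_strategy; try assumption.
    apply mul_two_sub_lt_1; [lra | assumption].
  - apply no_bob_winning_strategy; try assumption.
    apply mul_two_sub_lt_1; [lra | assumption].
Qed.
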